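(* Let $G$ be a finite induced regular group and let $x\in G$ be such that $C_G(x)$ is a maximal centralizer and $C_G(x)\neq \beta_G(x)\cup Z(G)$. Then there is an element $y\in C_G(x)\setminus\beta_G(x)$ such that the order of $yZ(G)$ in $G/Z(G)$ is a prime.
   Context: For a finite group $G$, $C_G(x)$ denotes the centralizer of $x\in G$ and $Z(G)$ the center; $\beta_G(x)=\{y\in G\mid C_G(y)=C_G(x)\}$. The non-centralizer graph $\Upsilon_G$ is the simple graph with vertex set $G$ in which two distinct vertices $x,y$ are adjacent iff $C_G(x)\neq C_G(y)$; the induced non-centralizer graph $\Upsilon_{G\setminus Z(G)}$ is its induced subgraph on the vertex set $G\setminus Z(G)$. $G$ is called induced regular if $\Upsilon_{G\setminus Z(G)}$ is a regular graph (all vertices have the same degree). A centralizer $C_G(x)$ is called maximal if it is not contained in any other proper centralizer of $G$. *)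

From mathcomp Require Import all_boot all_fingroup all_solvable.
Set Implicit Arguments. Unset Strict Implicit. Unset Printing Implicit Defensive.
Import GroupScope.
Local Open Scope group_scope.

Definition beta_set (gT : finGroupType) (G : {group gT}) (x : gT) : {set gT} :=
  [set y in G | 'C_G[y] == 'C_G[x]].

(* adjacency in the non-centralizer graph: distinct and different centralizers *)
Definition nc_adj (gT : finGroupType) (G : {group gT}) (x y : gT) : bool :=
  (x != y) && ('C_G[x] != 'C_G[y]).

Definition induced_deg (gT : finGroupType) (G : {group gT}) (x : gT) : nat :=
  #|[set y in G :\: 'Z(G) | nc_adj G x y]|.

Definition induced_regular (gT : finGroupType) (G : {group gT}) : Prop :=
  forall x y, x \in G :\: 'Z(G) -> y \in G :\: 'Z(G) ->
    induced_deg G x = induced_deg G y.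

Definition maximal_centralizer (gT : finGroupType) (G : {group gT}) (x : gT) : Prop :=
  'C_G[x] \proper G /\
  forall y, y \in G -> 'C_G[y] \proper G -> 'C_G[x] \subset 'C_G[y] ->
    'C_G[y] = 'C_G[x].

From mathcomp Require Import all_boot all_fingroup all_solvable.
Import GroupScope.
Local Open Scope group_scope.
Set Implicit Arguments. Unset Strict Implicit. Unset Printing Implicit Defensive.

(* Maximality of C := C_G(x) gives beta_G(x) u Z(G) = Z(C), a group. Pick y in C
   outside Z(C) with y^p in Z(C) for a prime p. If y^p is central in G, then yZ(G)
   has order p. Otherwise y^p lies in beta_G(x), so C_G(y) <= C_G(y^p) = C, and the
   same holds for every y a with a in Z(C); then C_G(y a) = C_C(y a) = C_C(y) = C_G(y),
   so y Z(C) <= beta_G(y). But regularity forces |beta_G(y)| = |beta_G(x)|, which is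
   smaller than |Z(C)| = |beta_G(x)| + |Z(G)|. *)

Section GroupFacts.
Variable gT : finGroupType.
Implicit Types (G H : {group gT}) (g x y a : gT).

Lemma cycle_prime_step H y : y \notin H ->
  exists2 p, prime p & exists2 z, z \in <[y]> & (z \notin H) && (z ^+ p \in H).
Proof.
have [n] := ubnP #[y]; elim: n y => // n IHn y le_y_n yNH.
set p := pdiv #[y].
have p_pr : prime p by rewrite pdiv_prime // order_gt1; apply: contraNneq yNH => ->.
have [ypH | ypNH] := boolP (y ^+ p \in H).
  by exists p => //; exists y; rewrite ?cycle_id ?yNH.
have [|q q_pr [z zyp zH]] := IHn _ _ ypNH.
  rewrite orderXdiv ?pdiv_dvd // -ltnS (leq_trans _ le_y_n) // ltnS.
  by rewrite ltn_Pdiv ?prime_gt1 ?order_gt0.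
exists q => //; exists z => //; apply: subsetP zyp.
by rewrite cycle_subG mem_cycle.
Qed.

Lemma order_coset_prime H y p : prime p -> y \in 'N(H) -> y \notin H ->
  y ^+ p \in H -> #[coset H y] = p.
Proof.
move=> p_pr nHy yNH ypH; apply/(prime_nt_dvdP p_pr).
  by rewrite order_eq1; apply: contraNneq yNH; apply: coset_idr.
by rewrite order_dvdn -(morphX (coset_morphism H)) //= coset_id.
Qed.

Lemma center_subcent1E G g : g \in G -> (g \in 'Z(G)) = ('C_G[g] == G).
Proof.
move=> gG; rewrite inE gG /= -sub_cent1.
by rewrite eqEsubset subsetIl subsetI subxx.
Qed.

Lemma subcent1X G y n : 'C_G[y] \subset 'C_G[y ^+ n].
Proof. by rewrite setIS // -!cent_cycle centS // cycleX. Qed.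

Lemma subcent1_mul_center H y a : a \in 'Z(H) -> 'C_H[y * a] = 'C_H[y].
Proof.
case/centerP=> _ cHa; apply/setP=> h; rewrite !in_setI.
have [hH | //] := boolP (h \in H); have cah := cHa h hH.
apply/cent1P/cent1P=> [cyah | cyh]; last by apply: commuteM => //; apply: commute_sym.
by rewrite -(mulgK a y); apply: commuteM => //; apply/commuteV/commute_sym.
Qed.

Lemma subcent1_restrict G H y : H \subset G -> 'C_G[y] \subset H ->
  'C_G[y] = 'C_H[y].
Proof.
move=> sHG sCH; apply/eqP.
by rewrite eqEsubset subsetI sCH subsetIr setSI.
Qed.

Lemma center_subcent1_subE G x a : x \in G -> a \in G ->
  (a \in 'Z('C_G[x])) = ('C_G[x] \subset 'C_G[a]).
Proof.
move=> xG aG; rewrite subsetI subsetIl sub_cent1 /center in_setI andbC.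
apply: andb_idr; rewrite -sub_cent1 => /subsetP/(_ x).
by rewrite !in_setI xG cent1id aG cent1C; apply.
Qed.

End GroupFacts.

Section NonCentralizerGraph.
Variable gT : finGroupType.
Implicit Types (G : {group gT}) (g : gT).

Lemma beta_sub_noncentral G g : g \in G :\: 'Z(G) ->
  beta_set G g \subset G :\: 'Z(G).
Proof.
case/setDP=> gG gNZ; apply/subsetP=> b /setIdP[bG /eqP CbCg].
by rewrite inE bG andbT center_subcent1E // CbCg -center_subcent1E.
Qed.

Lemma induced_deg_noncentral G g : g \in G :\: 'Z(G) ->
  induced_deg G g = #|G :\: 'Z(G)| - #|beta_set G g|.
Proof.
move=> gD; rewrite /induced_deg -(setIidPr (beta_sub_noncentral gD)) -cardsD.
apply: eq_card => h; rewrite !inE /nc_adj.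
case: (h \in G) (h \in 'C(G)) => [] []; rewrite /= ?andbF ?andbT //.
by case: (eqVneq g h) => [->|_]; rewrite ?eqxx // eq_sym.
Qed.

Lemma induced_regular_card_beta G : induced_regular G ->
  {in G :\: 'Z(G) &, forall g h, #|beta_set G g| = #|beta_set G h|}.
Proof.
move=> regG g h gD hD; have := regG g h gD hD.
rewrite !induced_deg_noncentral // => /(congr1 (subn #|G :\: 'Z(G)|)).
by rewrite !subKn // subset_leq_card // beta_sub_noncentral.
Qed.

End NonCentralizerGraph.

Section MaximalCentralizer.
Variables (gT : finGroupType) (G : {group gT}) (x : gT).
Hypotheses (xG : x \in G) (maxCx : maximal_centralizer G x).

Local Notation C := 'C_G[x].

Lemma beta_cup_center : beta_set G x :|: 'Z(G) = 'Z(C).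
Proof.
have [_ maxC] := maxCx.
apply/eqP; rewrite eqEsubset; apply/andP; split; apply/subsetP=> a.
  case/setUP=> [/setIdP[aG /eqP CaCx] | aZ].
    by rewrite center_subcent1_subE // CaCx.
  have aG := subsetP (center_sub G) a aZ.
  rewrite center_subcent1_subE //; move: aZ.
  by rewrite center_subcent1E // => /eqP->; rewrite subsetIl.
move=> aZC; have aG : a \in G.
  by apply: (subsetP (subsetIl G 'C[x])); apply: (subsetP (center_sub C)).
rewrite center_subcent1_subE // in aZC.
have [prCa | ] := boolP ('C_G[a] \proper G).
  by apply/setUP; left; rewrite inE aG maxC ?eqxx.
rewrite properE subsetIl negbK => sGCa; apply/setUP; right.
by rewrite center_subcent1E // eqEsubset subsetIl.
Qed.

Lemma noncentral_x : x \in G :\: 'Z(G).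
Proof. by rewrite inE xG andbT center_subcent1E // proper_neq // maxCx.1. Qed.

Lemma card_beta_lt_center : #|beta_set G x| < #|'Z(C)|.
Proof.
rewrite -beta_cup_center cardsU.
have := beta_sub_noncentral noncentral_x; rewrite subsetD => /andP[_].
by move/disjoint_setI0->; rewrite cards0 subn0 -addn1 leq_add2l cardG_gt0.
Qed.

Hypothesis coset_not_prime : forall y, y \in C :\: beta_set G x ->
  ~~ prime #[coset 'Z(G) y].

Lemma subcent1_of_prime_step y p : prime p -> y \in C -> y \notin 'Z(C) ->
  y ^+ p \in 'Z(C) -> 'C_G[y] \subset C.
Proof.
rewrite -beta_cup_center => p_pr yC yNA; case/setUP=> [/setIdP[_ /eqP <-] | ypZ].
  exact: subcent1X.
have yG : y \in G by case/setIP: yC.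
have yNZ : y \notin 'Z(G) by apply: contra yNA => yZ; rewrite in_setU yZ orbT.
have nZy : y \in 'N('Z(G)) := subsetP (normal_norm (center_normal G)) y yG.
have yD : y \in C :\: beta_set G x.
  by rewrite in_setD yC andbT; apply: contra yNA => yB; rewrite in_setU yB.
by have := coset_not_prime yD; rewrite (order_coset_prime p_pr nZy yNZ ypZ) p_pr.
Qed.

Lemma mul_center_beta y p a : prime p -> y \in C -> y \notin 'Z(C) ->
  y ^+ p \in 'Z(C) -> a \in 'Z(C) -> y * a \in beta_set G y.
Proof.
move=> p_pr yC yNZ ypZ aZ.
have aC := subsetP (center_sub C) a aZ.
have cya : commute y a by apply/commute_sym; case/centerP: aZ => _; apply.
have yaC : y * a \in C by rewrite groupM.
have yaNZ : y * a \notin 'Z(C) by rewrite groupMr.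
have yapZ : (y * a) ^+ p \in 'Z(C) by rewrite expgMn // groupM // groupX.
have sCyC := subcent1_of_prime_step p_pr yC yNZ ypZ.
have sCyaC := subcent1_of_prime_step p_pr yaC yaNZ yapZ.
rewrite inE (subsetP (subsetIl G _) _ yaC) /=.
rewrite (subcent1_restrict (subsetIl G _) sCyC).
by rewrite (subcent1_restrict (subsetIl G _) sCyaC) subcent1_mul_center.
Qed.

Lemma card_center_le_beta y p : prime p -> y \in C -> y \notin 'Z(C) ->
  y ^+ p \in 'Z(C) -> #|'Z(C)| <= #|beta_set G y|.
Proof.
move=> p_pr yC yNZ ypZ; rewrite -(card_imset _ (mulgI y)) subset_leq_card //.
by apply/subsetP=> _ /imsetP[a aZ ->]; apply: mul_center_beta p_pr _ _ _ _.
Qed.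

End MaximalCentralizer.

Theorem proposition3p3 (gT : finGroupType) (G : {group gT}) (x : gT) :
  induced_regular G -> x \in G -> maximal_centralizer G x ->
  'C_G[x] != beta_set G x :|: 'Z(G) ->
  exists2 y, y \in 'C_G[x] :\: beta_set G x &
    prime #[coset 'Z(G) y].
Proof.
move=> regG xG maxCx; rewrite beta_cup_center // => CxNZ.
apply/exists_inP/contraT => /exists_inPn coset_not_prime.
have [y0 y0C y0NZ] : exists2 y0, y0 \in 'C_G[x] & y0 \notin 'Z('C_G[x]).
  by apply/subsetPn; apply: contra CxNZ => sCZ; rewrite eqEsubset sCZ center_sub.
have [p p_pr [y y0y /andP[/= yNZ ypZ]]] := cycle_prime_step y0NZ.
have yC : y \in 'C_G[x] by apply: subsetP y0y; rewrite cycle_subG.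
have yD : y \in G :\: 'Z(G).
  rewrite in_setD (subsetP (subsetIl G _) _ yC) andbT.
  by apply: contra yNZ; rewrite -beta_cup_center // => yZ; rewrite in_setU yZ orbT.
have := card_center_le_beta xG maxCx coset_not_prime p_pr yC yNZ ypZ.
rewrite (induced_regular_card_beta regG yD (noncentral_x xG maxCx)).
by rewrite leqNgt card_beta_lt_center.
Qed.
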